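(* Let $\sigma\ge 2$, $k\ge 1$, let $U$ be any rotation of a $\sigma$-ary de Bruijn cycle of order $k$, and let $w_{\mathrm{lin}}=U\,U[0..k-2]$. Let $\chi$ be the size of a smallest suffixient set for $w_{\mathrm{lin}}\$$ and $r$ the number of runs of $\operatorname{BWT}(w_{\mathrm{lin}}\$)$. Then $$\frac{\chi}{r}<\frac{\sigma}{\sigma-1}.$$
   Context: A $\sigma$-ary de Bruijn cycle of order $k$ is a cyclic word of length $\sigma^k$ over an ordered alphabet $\Sigma$ of size $\sigma$ in which every word of $\Sigma^k$ occurs exactly once as a cyclic length-$k$ window. Strings are $0$-indexed; $v[0..j]$ is the prefix ending at position $j$. $\$\notin\Sigma$ is an end-marker smaller than all letters, appended once. $\operatorname{BWT}(v)$ is the last column of the matrix of lexicographically sorted cyclic rotations of $v$; a run is a maximal block of one repeated symbol. For a string $v$ over $\Sigma\cup\{\$\}$, a substring $x$ (possibly empty) is right-maximal if $xa,xb$ are substrings of $v$ for two distinct symbols $a\ne b$; these words $xa$ are the right-extensions of $v$. A set $S$ of positions of $v$ is suffixient if every right-extension of $v$ is a suffix of $v[0..j]$ for some $j\in S$. *)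

From HB Require Import structures.
From mathcomp Require Import all_boot all_order all_algebra.
Set Implicit Arguments. Unset Strict Implicit. Unset Printing Implicit Defensive.

(* Alphabet Sigma = {0, ..., sigma-1} (as nat, natural order).
   Strings over Sigma ∪ {$} are encoded as seq nat with $ := 0 and
   letter a := a.+1 (order preserving, $ smallest). *)

Definition cyc_window (U : seq nat) (k i : nat) : seq nat :=
  [seq nth 0 U ((i + j) %% size U) | j <- iota 0 k].

Definition de_bruijn_cycle (sigma k : nat) (U : seq nat) : Prop :=
  size U = sigma ^ k /\ all (fun a => a < sigma) U /\
  forall x : seq nat, size x = k -> all (fun a => a < sigma) x ->
    count (fun i => cyc_window U k i == x) (iota 0 (size U)) = 1.

Definition dollar (w : seq nat) : seq nat := rcons (map S w) 0.

Fixpoint lexle (s t : seq nat) : bool :=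
  match s, t with
  | [::], _ => true
  | _ :: _, [::] => false
  | x :: s', y :: t' => (x < y) || ((x == y) && lexle s' t')
  end.

Definition bwt (v : seq nat) : seq nat :=
  [seq last 0 r | r <- sort lexle [seq rot i v | i <- iota 0 (size v)]].

Fixpoint runs (s : seq nat) : nat :=
  match s with
  | [::] => 0
  | x :: s' => match s' with
               | [::] => 1
               | y :: _ => (x != y) + runs s'
               end
  end.

Definition right_extension (v y : seq nat) : Prop :=
  exists x a, y = rcons x a /\ infix (rcons x a) v /\
    exists2 b, b != a & infix (rcons x b) v.

Definition suffixient (v : seq nat) (S : {set 'I_(size v)}) : Prop :=
  forall y, right_extension v y ->
    exists2 j : 'I_(size v), j \in S & suffix y (take j.+1 v).

Definition smallest_suffixient_size (v : seq nat) (chi : nat) : Prop :=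
  (exists S : {set 'I_(size v)}, suffixient S /\ #|S| = chi) /\
  (forall S : {set 'I_(size v)}, suffixient S -> chi <= #|S|).

From HB Require Import structures.
From mathcomp Require Import all_boot all_order all_algebra.
From mathcomp Require Import zify.
Import Order.TTheory GRing.Theory Num.Theory.

Set Implicit Arguments.
Unset Strict Implicit.
Unset Printing Implicit Defensive.

(* Let M = sigma^k = |U| and v = w_lin $, so that |v| = M + k.  A substring of
   v ending before position k - 1 is a suffix of a prefix of U of length < k;
   padded on the left to length k this prefix is a window of the de Bruijn
   cycle, so the substring also ends at some position >= k - 1.  Hence the last
   M + 1 positions of v are suffixient and chi <= M + 1.
   Attach to every rotation of v the pair (its first k - 1 letters, its last
   letter).  Equal prefixes are contiguous among the sorted rotations, so
   r >= #pairs - #prefixes + 1, and since each prefix containing $ occurs in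
   some pair, r >= #($-free pairs) - #($-free prefixes) + 1.  The rotations
   starting at 1, ..., M have $-free prefixes and carry the M distinct windows
   of U as their pairs, while there are at most sigma^(k-1) $-free prefixes.
   So r >= M + 1 - sigma^(k-1), and (M + 1)(sigma - 1) < sigma r follows from
   M = sigma * sigma^(k-1). *)

Fixpoint nruns {T : eqType} (s : seq T) : nat :=
  if s is x :: s' then
    if s' is y :: _ then (x != y) + nruns s' else 1
  else 0.

Lemma runsE (s : seq nat) : runs s = nruns s.
Proof. by elim: s => // x [|y s] //= ->. Qed.

Lemma nruns_cons2 (T : eqType) (x y : T) s :
  nruns [:: x, y & s] = (x != y) + nruns (y :: s).
Proof. by []. Qed.

Lemma undup_cons (T : eqType) (x : T) s :
  undup (x :: s) = if x \in s then undup s else x :: undup s.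
Proof. by []. Qed.

Lemma nruns_pairs_le (A : Type) (T1 T2 : eqType) (f : A -> T1) (g : A -> T2) L :
  nruns [seq (f x, g x) | x <- L] + (0 < size L) <= nruns (map f L) + nruns (map g L).
Proof.
elim: L => // x [|y L] IH //; move: IH; rewrite !map_cons !nruns_cons2 xpair_eqE.
by case: (f x =P f y); case: (g x =P g y) => _ _ /=; lia.
Qed.

Lemma size_undup_le_nruns (T : eqType) (s : seq T) : size (undup s) <= nruns s.
Proof.
elim: s => // x [|y s] IH //; rewrite nruns_cons2 undup_cons.
have [->|_] := eqVneq x y; first by rewrite mem_head.
by case: ifP => _; rewrite /= ?add1n ?ltnS // ltnW.
Qed.

Lemma nruns_le_size_undup (T : eqType) (r : rel T) (s : seq T) :
  transitive r -> antisymmetric r -> sorted r s -> nruns s <= size (undup s).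
Proof.
move=> r_trans r_anti; elim: s => // x [|y s] IH // /andP[rxy ys].
rewrite nruns_cons2 undup_cons.
have [->|neq_xy] := eqVneq x y; first by rewrite mem_head IH.
have -> : (x \in y :: s) = false.
  apply/negbTE; rewrite in_cons negb_or neq_xy /=; apply/negP => xs.
  have ryx := allP (order_path_min r_trans ys) x xs.
  by move/eqP: neq_xy; apply; apply: r_anti; rewrite rxy ryx.
by rewrite /= add1n ltnS IH.
Qed.

Lemma size_undup_map (A B : eqType) (h : A -> B) (s : seq A) :
  size (undup (map h s)) <= size (undup s).
Proof.
rewrite -(size_map h); apply: uniq_leq_size (undup_uniq _) _ => y.
by rewrite mem_undup => /mapP[x xs ->]; rewrite map_f ?mem_undup.
Qed.

Lemma eq_size_undup (T : eqType) (s1 s2 : seq T) :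
  s1 =i s2 -> size (undup s1) = size (undup s2).
Proof. by move=> eq_s; apply/perm_size/perm_undup. Qed.

Lemma size_undup_filterC (T : eqType) (a : pred T) (s : seq T) :
  size (undup s) = size (undup [seq x <- s | a x]) + size (undup [seq x <- s | ~~ a x]).
Proof. by rewrite -!filter_undup !size_filter; apply/esym/count_predC. Qed.

Lemma size_undup_pairs_filter (A : Type) (T1 T2 : eqType) (f : A -> T1) (g : A -> T2)
    (a : pred T1) (s : seq A) (pairs := [seq (f x, g x) | x <- s]) :
  size (undup (map f s)) + size (undup [seq p <- pairs | ~~ a p.1])
  <= size (undup pairs) + size (undup [seq y <- map f s | ~~ a y]).
Proof.
rewrite (size_undup_filterC a) (size_undup_filterC (fun p => a p.1) pairs).
rewrite addnAC !leq_add2r.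
have -> : [seq y <- map f s | a y] = map fst [seq p <- pairs | a p.1].
  by rewrite !filter_map -map_comp.
exact: size_undup_map.
Qed.

Lemma size_undup_words (T : eqType) (alph : seq T) m (s : seq (seq T)) :
  {in s, forall x, size x = m /\ {subset x <= alph}} ->
  size (undup s) <= size alph ^ m.
Proof.
elim: m s => [|m IH] s words_s.
  apply: (uniq_leq_size (s2 := [:: [::]]) (undup_uniq s)) => x.
  by rewrite mem_undup => /words_s[/size0nil -> _]; apply: mem_head.
pose heads_tails := [seq a :: x | a <- alph, x <- undup (map behead s)].
apply: leq_trans (uniq_leq_size (s2 := heads_tails) (undup_uniq s) _) _.
  move=> [|a x]; rewrite mem_undup => xs; have [//= _ sub_x] := words_s _ xs.
  by rewrite allpairs_f ?sub_x ?mem_head // mem_undup (map_f behead xs).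
rewrite size_allpairs expnS leq_mul2l IH ?orbT // => _ /mapP[x xs ->].
have [size_x sub_x] := words_s x xs.
by split=> [|b /mem_behead]; [rewrite size_behead size_x | apply: sub_x].
Qed.

Lemma size_undup_pairs_le_nruns_sort (A T1 T2 : eqType) (leA : rel A) (r : rel T1)
    (f : A -> T1) (g : A -> T2) (R : seq A) :
  total leA -> transitive r -> antisymmetric r ->
  {homo f : x y / leA x y >-> r x y} -> 0 < size R ->
  size (undup [seq (f x, g x) | x <- R]) + 1
  <= size (undup (map f R)) + nruns (map g (sort leA R)).
Proof.
move=> leA_total r_trans r_anti f_homo R_gt0; set L := sort leA R.
have memL h : map h L =i map h R by apply/perm_mem/perm_map/permEl/perm_sort.
rewrite -(eq_size_undup (memL _ f)) -(eq_size_undup (memL _ (fun x => (f x, g x)))).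
have sorted_fL : sorted r (map f L) := homo_sorted f_homo _ (sort_sorted leA_total R).
have pairs_le := nruns_pairs_le f g L; rewrite size_sort R_gt0 in pairs_le.
apply: leq_trans (leq_add (size_undup_le_nruns _) (leqnn 1)) (leq_trans pairs_le _).
by rewrite leq_add2r (nruns_le_size_undup r_trans r_anti sorted_fL).
Qed.

Lemma lexleE s t : lexle s t = (s <= t :> seqlexi nat)%O.
Proof.
elim: s t => [|x s IH] [|y t] //=; rewrite lexi_cons IH /=.
by rewrite !leEnat; case: ltngtP.
Qed.

Lemma lexle_trans : transitive lexle.
Proof. by move=> t s u; rewrite !lexleE; apply: le_trans. Qed.

Lemma lexle_anti : antisymmetric lexle.
Proof. by move=> s t; rewrite !lexleE; apply: le_anti. Qed.

Lemma lexle_total : total lexle.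
Proof. by move=> s t; rewrite !lexleE; apply: le_total. Qed.

Lemma lexle_take m : {homo take m : s t / lexle s t}.
Proof.
elim: m => [|m IH] [|x s] [|y t] //=.
by case/orP=> [->//|/andP[/eqP <- /IH ->]]; rewrite eqxx orbT.
Qed.

Lemma nth_rot (T : Type) (x0 : T) (s : seq T) n i :
  n < size s -> i < size s -> nth x0 (rot n s) i = nth x0 s ((n + i) %% size s).
Proof.
move=> lt_n lt_i; rewrite /rot nth_cat size_drop nth_drop.
case: ltnP => [in_drop|in_take]; first by rewrite modn_small //; lia.
rewrite nth_take; last by lia.
have -> : n + i = (n + i - size s) + size s by lia.
by rewrite modnDr modn_small; [congr nth; lia | lia].
Qed.

Lemma count_rot (T : Type) (a : pred T) n (s : seq T) : count a (rot n s) = count a s.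
Proof. by rewrite /rot count_cat addnC -count_cat cat_take_drop. Qed.

Lemma rot_last_take (T : Type) (x0 : T) (s : seq T) i m : 0 < i -> i + m <= size s ->
  last x0 (rot i s) :: take m (rot i s) = take m.+1 (drop i.-1 s).
Proof.
case: i => // i _ ims /=; have lt_is : i < size s by lia.
rewrite /rot takel_cat ?size_drop; last by lia.
by rewrite (take_nth x0 lt_is) (drop_nth x0 lt_is) last_cat last_rcons.
Qed.

Lemma card_ord_geq N m : #|[set j : 'I_N | m <= j]| = N - m.
Proof.
rewrite cardsE cardE /enum_mem size_filter -enumT -(count_map val (leq m)) val_enum_ord.
by elim: N => // N IH; rewrite -addn1 iotaD count_cat IH /=; lia.
Qed.

Lemma take_dollar (w : seq nat) n : n <= size w -> take n (dollar w) = map S (take n w).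
Proof. by move=> nw; rewrite /dollar -cats1 takel_cat ?size_map // map_take. Qed.

Lemma take_drop_dollar (w : seq nat) d n : d + n <= size w ->
  take n (drop d (dollar w)) = map S (take n (drop d w)).
Proof. by move=> dnw; rewrite !take_drop take_dollar ?map_drop // addnC. Qed.

Lemma size_cyc_window (U : seq nat) k i : size (cyc_window U k i) = k.
Proof. by rewrite size_map size_iota. Qed.

Lemma cyc_window_rot (V : seq nat) n k i : n < size V ->
  cyc_window (rot n V) k i = cyc_window V k ((n + i) %% size V).
Proof.
move=> nV; apply: eq_map => j; rewrite size_rot nth_rot ?ltn_pmod //; last by lia.
by rewrite modnDmr modnDml addnA.
Qed.

Lemma cyc_windows_rot (V : seq nat) n k : n < size V ->
  [seq cyc_window (rot n V) k i | i <- iota 0 (size V)]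
  = rot n [seq cyc_window V k i | i <- iota 0 (size V)].
Proof.
move=> nV; have V_gt0 : 0 < size V by lia.
apply: (@eq_from_nth _ [::]) => [|i]; first by rewrite size_rot !size_map.
rewrite size_map size_iota => iV.
rewrite nth_rot ?size_map ?size_iota // !(nth_map 0) ?size_iota ?ltn_pmod //.
by rewrite !nth_iota ?ltn_pmod // cyc_window_rot.
Qed.

Lemma de_bruijn_cycle_rot sigma k (V : seq nat) n :
  de_bruijn_cycle sigma k V -> de_bruijn_cycle sigma k (rot n V).
Proof.
have [nV|/rot_oversize -> //] := ltnP n (size V).
move=> [sizeV [lettersV onceV]]; split; first by rewrite size_rot.
split; first by apply/allP => a; rewrite mem_rot => /(allP lettersV).
move=> x size_x letters_x; rewrite size_rot -(count_map _ (pred1 x)) cyc_windows_rot //.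
by rewrite count_rot count_map onceV.
Qed.

Section DeBruijnWindows.

Variables (sigma k : nat) (U : seq nat).
Hypothesis dbU : de_bruijn_cycle sigma k U.

Lemma de_bruijn_window_exists z : size z = k -> all (fun a => a < sigma) z ->
  exists2 i, i < size U & cyc_window U k i = z.
Proof.
move=> size_z letters_z; have [_ [_ /(_ z size_z letters_z) once]] := dbU.
have /hasP[i] : has (fun i => cyc_window U k i == z) (iota 0 (size U)).
  by rewrite has_count once.
by rewrite mem_iota => /andP[_ iU] /eqP; exists i.
Qed.

Lemma de_bruijn_window_inj i j : i < size U -> j < size U ->
  cyc_window U k i = cyc_window U k j -> i = j.
Proof.
move=> iU jU eq_ij; have [_ [lettersU once]] := dbU.
have letters_i : all (fun a => a < sigma) (cyc_window U k i).
  by apply/allP=> _ /mapP[t _ ->]; apply/(allP lettersU)/mem_nth/ltn_pmod; lia.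
move: (once _ (size_cyc_window U k i) letters_i); rewrite -size_filter.
have : i \in [seq t <- iota 0 (size U) | cyc_window U k t == cyc_window U k i].
  by rewrite mem_filter eqxx mem_iota.
have : j \in [seq t <- iota 0 (size U) | cyc_window U k t == cyc_window U k i].
  by rewrite mem_filter eq_ij eqxx mem_iota.
by case: filter => [|t [|]] //; rewrite !inE => /eqP -> /eqP ->.
Qed.

End DeBruijnWindows.

Section DollarWord.

Variables (sigma k : nat) (U : seq nat).
Hypotheses (sigma_gt1 : 1 < sigma) (k_gt0 : 0 < k) (dbU : de_bruijn_cycle sigma k U).

Local Notation w := (U ++ take k.-1 U).
Local Notation v := (dollar w).
Local Notation rots := [seq rot i v | i <- iota 0 (size v)].

Let k_lt_size : k < size U.
Proof. by have [-> _] := dbU; apply: ltn_expl. Qed.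

Lemma size_wlin : size w = size U + k.-1.
Proof. by rewrite size_cat size_takel //; lia. Qed.

Lemma size_dollar_wlin : size v = size U + k.
Proof. by rewrite size_rcons size_map size_wlin; lia. Qed.

Lemma nth_wlin t : t < size w -> nth 0 w t = nth 0 U (t %% size U).
Proof.
rewrite size_wlin nth_cat => tw; case: ltnP => [tU|Ut]; first by rewrite modn_small.
rewrite nth_take; last by lia.
by rewrite -{2}(subnK Ut) modnDr modn_small //; lia.
Qed.

Lemma wlin_window i : i < size U -> take k (drop i w) = cyc_window U k i.
Proof.
move=> iU; have size_lhs : size (take k (drop i w)) = k.
  by rewrite size_takel // size_drop size_wlin; lia.
apply: (@eq_from_nth _ 0) => [|t]; rewrite size_lhs ?size_cyc_window // => tk.
have itw : i + t < size w by rewrite size_wlin; lia.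
by rewrite nth_take // nth_drop nth_wlin // (nth_map 0) ?size_iota // nth_iota.
Qed.

Lemma letters_dollar_wlin a : a \in v -> a <= sigma.
Proof.
rewrite mem_rcons inE => /orP[/eqP -> // | /mapP[b b_w ->]].
have [_ [lettersU _]] := dbU; apply: (allP lettersU).
by move: b_w; rewrite mem_cat => /orP[// | /mem_take].
Qed.

Lemma infix_dollar_wlin_end y :
  infix y v -> exists2 e, k <= e <= size v & suffix y (take e v).
Proof.
case/infixP=> s1 [s2 def_v]; set e := size s1 + size y.
have take_e : take e v = s1 ++ y by rewrite def_v catA take_size_cat ?size_cat.
have e_v : e <= size v by rewrite def_v !size_cat /e addnA leq_addr.
have [k_e|e_k] := leqP k e.
  by exists e; rewrite ?k_e ?e_v // take_e; apply/suffixP; exists s1.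
have e_w : e <= size w by rewrite size_wlin; lia.
have e_U : e <= size U by lia.
pose z := nseq (k - e) 0 ++ take e U.
have size_z : size z = k by rewrite size_cat size_nseq size_takel; lia.
have letters_z : all (fun a => a < sigma) z.
  rewrite all_cat all_nseq (ltnW sigma_gt1) orbT /=.
  by have [_ [lettersU _]] := dbU; apply/allP => a /mem_take /(allP lettersU).
have [i iU win_i] := de_bruijn_window_exists dbU size_z letters_z.
have ik_w : i + k <= size w by rewrite size_wlin; lia.
exists (i + k); first by rewrite size_dollar_wlin; lia.
rewrite take_dollar // takeD wlin_window // win_i !map_cat.
have -> : map S (take e U) = s1 ++ y by rewrite -take_e take_dollar // takel_cat.
by apply/suffixP; exists (map S (take i w) ++ map S (nseq (k - e) 0) ++ s1); rewrite !catA.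
Qed.

Lemma suffixient_dollar_wlin : suffixient [set j : 'I_(size v) | k.-1 <= j].
Proof.
move=> _ [x [a [-> [occ _]]]].
have [e /andP[k_e e_v] suffix_e] := infix_dollar_wlin_end occ.
have e_gt0 : 0 < e by lia.
have lt_e : e.-1 < size v by lia.
by exists (Ordinal lt_e); rewrite ?inE /= ?prednK //; lia.
Qed.

Lemma smallest_suffixient_dollar_wlin chi :
  smallest_suffixient_size v chi -> chi <= size U + 1.
Proof.
case=> _ /(_ _ suffixient_dollar_wlin).
by rewrite card_ord_geq size_dollar_wlin; lia.
Qed.

Lemma rot_dollar_wlin i : 0 < i <= size U ->
  last 0 (rot i v) :: take k.-1 (rot i v) = map S (cyc_window U k i.-1).
Proof.
case/andP=> i_gt0 iU.
have ik_v : i + k.-1 <= size v by rewrite size_dollar_wlin; lia.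
have ik_w : i.-1 + k <= size w by rewrite size_wlin; lia.
have iU' : i.-1 < size U by lia.
by rewrite rot_last_take // prednK // take_drop_dollar // wlin_window.
Qed.

Lemma size_undup_dollar_free_pairs :
  size U <= size (undup [seq p <- [seq (take k.-1 x, last 0 x) | x <- rots] | 0 \notin p.1]).
Proof.
pose pair_at i := (take k.-1 (rot i v), last 0 (rot i v)).
have range_iota i : (i \in iota 1 (size U)) = (0 < i <= size U) by rewrite mem_iota add1n.
have pair_at_inj : {in iota 1 (size U) &, injective pair_at}.
  move=> i j; rewrite !range_iota => iU jU [eq_take eq_last].
  have lt_i : i.-1 < size U by lia.
  have lt_j : j.-1 < size U by lia.
  have := rot_dollar_wlin jU; rewrite -eq_take -eq_last rot_dollar_wlin //.
  by move/(inj_map succn_inj)/(de_bruijn_window_inj dbU lt_i lt_j); lia.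
rewrite -[X in X <= _](size_iota 1) -(size_map pair_at).
apply: uniq_leq_size => [|p /mapP[i]]; first by rewrite map_inj_in_uniq ?iota_uniq.
rewrite range_iota => iU ->; rewrite mem_undup mem_filter /=; apply/andP; split.
  have /(congr1 behead)/= -> := rot_dollar_wlin iU.
  by apply/negP => /mem_behead/mapP[].
by apply: map_f; apply: map_f; rewrite mem_iota size_dollar_wlin; lia.
Qed.

Lemma size_undup_dollar_free_prefixes :
  size (undup [seq q <- map (take k.-1) rots | 0 \notin q]) <= sigma ^ k.-1.
Proof.
rewrite -[X in X ^ _](size_iota 1); apply: size_undup_words => q.
rewrite mem_filter andbC => /andP[/mapP[_ /mapP[i _ ->] ->] q_free]; split.
  by rewrite size_takel // size_rot size_dollar_wlin; lia.
move=> a a_q; have a_v : a \in v by rewrite -(mem_rot i) (mem_take a_q).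
have a_gt0 : 0 < a by rewrite lt0n; apply: contraNneq q_free => <-.
by rewrite mem_iota add1n ltnS a_gt0 letters_dollar_wlin.
Qed.

Lemma runs_bwt_dollar_wlin : size U + 1 <= runs (bwt v) + sigma ^ k.-1.
Proof.
have rots_gt0 : 0 < size rots by rewrite size_map size_iota size_dollar_wlin; lia.
have := size_undup_pairs_le_nruns_sort (last 0) lexle_total lexle_trans lexle_anti
  (lexle_take k.-1) rots_gt0.
have := size_undup_pairs_filter (take k.-1) (last 0) (fun q => 0 \in q) rots.
have := size_undup_dollar_free_pairs.
have := size_undup_dollar_free_prefixes.
rewrite /bwt runsE.
set prefixes := size (undup (map (take k.-1) rots)).
set pairs := size (undup [seq (take k.-1 x, last 0 x) | x <- rots]).
set free_pairs := size (undup [seq p <- [seq (take k.-1 x, last 0 x) | x <- rots] | 0 \notin p.1]).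
set free_prefixes := size (undup [seq q <- map (take k.-1) rots | 0 \notin q]).
set bwt_runs := nruns _.
lia.
Qed.

End DollarWord.

Lemma ratio_lt_sigma sigma k chi r : 1 < sigma -> 0 < k ->
  chi <= sigma ^ k + 1 -> sigma ^ k + 1 <= r + sigma ^ k.-1 ->
  ((chi%:R / r%:R : rat) < sigma%:R / sigma.-1%:R)%R.
Proof.
move=> sigma_gt1 k_gt0 chi_le r_ge.
have sigma_k : sigma ^ k = sigma * sigma ^ k.-1 by rewrite -expnS prednK.
have pow_gt0 : 0 < sigma ^ k.-1 by rewrite expn_gt0; lia.
rewrite sigma_k in chi_le r_ge.
have r_gt0 : 0 < r by nia.
have cross_lt : chi * sigma.-1 < sigma * r by nia.
rewrite ltr_pdivrMr ?ltr0n // mulrAC ltr_pdivlMr ?ltr0n; last lia.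
by rewrite -!natrM ltr_nat.
Qed.

Theorem theorem4 (sigma k : nat) (V : seq nat) (n : nat) (chi : nat) :
  2 <= sigma -> 1 <= k ->
  de_bruijn_cycle sigma k V ->
  let U := rot n V in
  let wlin := U ++ take k.-1 U in
  smallest_suffixient_size (dollar wlin) chi ->
  ((chi%:R / (runs (bwt (dollar wlin)))%:R : rat) < sigma%:R / (sigma.-1)%:R)%R.
Proof.
move=> sigma_gt1 k_gt0 dbV U wlin chi_min.
have dbU : de_bruijn_cycle sigma k U := de_bruijn_cycle_rot n dbV.
have [sizeU _] := dbU.
apply: (ratio_lt_sigma sigma_gt1 k_gt0); rewrite -sizeU.
  exact: smallest_suffixient_dollar_wlin sigma_gt1 k_gt0 dbU _ chi_min.
exact: runs_bwt_dollar_wlin sigma_gt1 k_gt0 dbU.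
Qed.
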